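(* In the multi-parameter setting described in the context, for every $\theta\in\Theta$ one has $H_\theta\le C_\Upsilon(\theta)$ in the sense of positive semidefinite order of $p\times p$ matrices, with equality if and only if $\bigl\langle \frac{\partial w_j}{\partial\theta^l}(\theta)\big|w_k(\theta)\bigr\rangle=0$ for all $l$ and all $j,k$ with $p_j(\theta)>0$ and $p_k(\theta)>0$.
   Context: Let $\Theta\subseteq\mathbb{R}^p$ be open and $D\ge1$. For $\theta=(\theta^1,\dots,\theta^p)\in\Theta$ let $\Phi_\theta$ be a quantum channel on $D\times D$ complex matrices and $\rho_0=|\psi_0\rangle\langle\psi_0|$ a fixed pure input state. Canonical Kraus operators are $D\times D$ matrices $\Upsilon_1(\theta),\dots,\Upsilon_D(\theta)$, differentiable in $\theta$, with $\sum_k\Upsilon_k^\dagger\Upsilon_k=\mathbb{I}$, $\Phi_\theta(\rho)=\sum_k\Upsilon_k\rho\Upsilon_k^\dagger$, and $\mathrm{tr}\{\Upsilon_k\rho_0\Upsilon_j^\dagger\}=\delta_{jk}p_k(\theta)$. Write $\Upsilon_k(\theta)|\psi_0\rangle=\sqrt{p_k(\theta)}|w_k(\theta)\rangle$ with $\{|w_k(\theta)\rangle\}$ an orthonormal basis of $\mathbb{C}^D$ differentiable in $\theta$; the output is $\rho_\theta=\sum_kp_k|w_k\rangle\langle w_k|$. Each $p_k$ is assumed either identically zero or strictly positive on $\Theta$. The multi-parameter Sarovar–Milburn bound is the $p\times p$ matrix with entries $C_\Upsilon(\theta)_{jk}=4\sum_l\mathrm{Re}\,\mathrm{tr}\{\frac{\partial\Upsilon_l}{\partial\theta^j}\rho_0(\frac{\partial\Upsilon_l}{\partial\theta^k})^\dagger\}$.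 The SLD quantum information is the $p\times p$ matrix with entries $(H_\theta)_{jk}=\mathrm{Re}\,\mathrm{tr}\{\lambda^j\rho_\theta\lambda^k\}$, where $\lambda^j$ is a Hermitian solution of $\frac{\partial\rho_\theta}{\partial\theta^j}=\frac12(\rho_\theta\lambda^j+\lambda^j\rho_\theta)$. *)

From HB Require Import structures.
From mathcomp Require Import all_boot all_order all_algebra.
From mathcomp Require Import all_classical all_reals all_analysis.
From mathcomp Require Import complex.

Set Implicit Arguments.
Unset Strict Implicit.
Unset Printing Implicit Defensive.
Import Order.TTheory GRing.Theory Num.Theory.
Import numFieldNormedType.Exports.
Local Open Scope ring_scope.

Section Defs.
Variable R : realType.

Definition mxadj (m n : nat) (A : 'M[R[i]]_(m, n)) : 'M[R[i]]_(n, m) :=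
  (map_mx (@conjc R) A)^T.

Definition braket (D : nat) (u v : 'cV[R[i]]_D) : R[i] := (mxadj u *m v) 0 0.

Definition ebasis (p : nat) (j : 'I_p) : 'rV[R]_p := delta_mx 0 j.

Definition c_differentiable (p : nat) (f : 'rV[R]_p -> R[i]) (th : 'rV[R]_p) :=
  differentiable (fun t => @complex.Re R (f t)) th /\ differentiable (fun t => @complex.Im R (f t)) th.

Definition pderC (p : nat) (f : 'rV[R]_p -> R[i]) (th : 'rV[R]_p) (j : 'I_p)
  : R[i] :=
  Complex ('D_(ebasis j) (fun t => @complex.Re R (f t)) th)
          ('D_(ebasis j) (fun t => @complex.Im R (f t)) th).

Definition cmx_differentiable (p m n : nat) (F : 'rV[R]_p -> 'M[R[i]]_(m, n))
  (th : 'rV[R]_p) := forall a b, c_differentiable (fun t => F t a b) th.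

Definition pderM (p m n : nat) (F : 'rV[R]_p -> 'M[R[i]]_(m, n))
  (th : 'rV[R]_p) (j : 'I_p) : 'M[R[i]]_(m, n) :=
  \matrix_(a, b) pderC (fun t => F t a b) th j.

Definition psd_le (p : nat) (A B : 'M[R]_p) : Prop :=
  forall x : 'rV[R]_p, 0 <= (x *m (B - A) *m x^T) 0 0.

Definition pure_state (D : nat) (psi0 : 'cV[R[i]]_D) : 'M[R[i]]_D :=
  psi0 *m mxadj psi0.

Definition out_state (p D : nat) (Ups : 'I_D -> 'rV[R]_p -> 'M[R[i]]_D)
  (rho0 : 'M[R[i]]_D) (th : 'rV[R]_p) : 'M[R[i]]_D :=
  \sum_(k < D) (Ups k th *m rho0 *m mxadj (Ups k th)).

Definition is_SLD (p D : nat) (rho : 'rV[R]_p -> 'M[R[i]]_D) (th : 'rV[R]_p)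
  (j : 'I_p) (lam : 'M[R[i]]_D) : Prop :=
  mxadj lam = lam /\
  pderM rho th j = (2%:R : R[i])^-1 *: (rho th *m lam + lam *m rho th).

Definition SLD_info (p D : nat) (rho : 'M[R[i]]_D) (lam : 'I_p -> 'M[R[i]]_D)
  : 'M[R]_p :=
  \matrix_(j, k) @complex.Re R (\tr (lam j *m rho *m lam k)).

Definition SM_bound (p D : nat) (Ups : 'I_D -> 'rV[R]_p -> 'M[R[i]]_D)
  (rho0 : 'M[R[i]]_D) (th : 'rV[R]_p) : 'M[R]_p :=
  \matrix_(j, k) (4%:R * \sum_(l < D)
     @complex.Re R (\tr (pderM (Ups l) th j *m rho0 *m mxadj (pderM (Ups l) th k)))).

End Defs.

From HB Require Import structures.
From mathcomp Require Import all_boot all_order all_algebra.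
From mathcomp Require Import all_classical all_reals all_analysis.
From mathcomp Require Import complex ring lra.
Import Order.TTheory GRing.Theory Num.Theory.
Import numFieldNormedType.Exports.
Local Open Scope ring_scope.
Local Open Scope complex_scope.
Set Implicit Arguments.
Unset Strict Implicit.
Unset Printing Implicit Defensive.

(* Work in the orthonormal basis w_m = w_m(theta) and write s_n = sqrt p_n,
   A^j_mn = <w_m| d_j Ups_n |psi0>, L^j_mn = <w_m| lam^j |w_n>.  By Parseval
   C_jk = 4 sum Re(A^k_mn^* A^j_mn) and H_jk = sum p_n Re(L^k_mn^* L^j_mn),
   while rho_theta w_n = p_n w_n turns the SLD equation into
   (p_m + p_n) L^j_mn = 2 (s_n A^j_mn + s_m (A^j_nm)^* ).  Eliminating L pair
   by pair gives
     C_jk - H_jk = sum_mn 2 Re(E^k_mn^* E^j_mn) / (p_m + p_n),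
     E^j_mn = s_m A^j_mn - s_n (A^j_nm)^*,
   a Gram matrix with nonnegative weights, which vanishes iff E^j_mn = 0
   whenever p_m + p_n > 0.  If p_n = 0 then Ups_n psi0 vanishes near theta,
   so A^j_mn = 0; if p_m, p_n > 0, differentiating Ups_n psi0 = s_n w_n and
   using that <w_m| d_j w_n> is anti-Hermitian in (m, n) gives
   E^j_mn = 2 s_m s_n <w_m| d_j w_n>. *)

Section PartialDerivatives.
Variables (R : realType) (p : nat) (th : 'rV[R]_p) (j : 'I_p).
Local Notation V := 'rV[R]_p.

Definition pderivable (f : V -> R[i]) :=
  derivable (fun t => complex.Re (f t)) th (ebasis R j) /\
  derivable (fun t => complex.Im (f t)) th (ebasis R j).

Lemma funReD (f g : V -> R[i]) :
  (fun t => complex.Re (f t + g t)) = (fun t => complex.Re (f t)) + (fun t => complex.Re (g t)).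
Proof. by apply: funext => t; rewrite !fctE; case: (f t) => ? ?; case: (g t). Qed.

Lemma funImD (f g : V -> R[i]) :
  (fun t => complex.Im (f t + g t)) = (fun t => complex.Im (f t)) + (fun t => complex.Im (g t)).
Proof. by apply: funext => t; rewrite !fctE; case: (f t) => ? ?; case: (g t). Qed.

Lemma funReM (f g : V -> R[i]) :
  (fun t => complex.Re (f t * g t)) =
  (fun t => complex.Re (f t)) * (fun t => complex.Re (g t))
  - (fun t => complex.Im (f t)) * (fun t => complex.Im (g t)).
Proof. by apply: funext => t; rewrite !fctE; case: (f t) => ? ?; case: (g t). Qed.

Lemma funImM (f g : V -> R[i]) :
  (fun t => complex.Im (f t * g t)) =
  (fun t => complex.Re (f t)) * (fun t => complex.Im (g t))
  + (fun t => complex.Im (f t)) * (fun t => complex.Re (g t)).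
Proof. by apply: funext => t; rewrite !fctE; case: (f t) => ? ?; case: (g t). Qed.

Lemma funRe_conj (f : V -> R[i]) :
  (fun t => complex.Re (conjc (f t))) = (fun t => complex.Re (f t)).
Proof. by apply: funext => t; case: (f t). Qed.

Lemma funIm_conj (f : V -> R[i]) :
  (fun t => complex.Im (conjc (f t))) = - (fun t => complex.Im (f t)).
Proof. by apply: funext => t; rewrite !fctE; case: (f t). Qed.

Lemma differentiable_pderivable f : c_differentiable f th -> pderivable f.
Proof. by move=> [dRe dIm]; split; apply: diff_derivable. Qed.

Lemma pderivable_cst (c : R[i]) : pderivable (fun _ => c).
Proof. by split; apply: derivable_cst. Qed.

Lemma pderC_cst (c : R[i]) : pderC (fun _ => c) th j = 0.
Proof.
rewrite /pderC.
have -> : (fun _ : V => complex.Re c) = cst (complex.Re c) by [].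
have -> : (fun _ : V => complex.Im c) = cst (complex.Im c) by [].
by rewrite !derive_cst.
Qed.

Lemma pderivableD f g : pderivable f -> pderivable g -> pderivable (fun t => f t + g t).
Proof.
move=> [f1 f2] [g1 g2]; rewrite /pderivable funReD funImD.
by split; [exact: derivableD f1 g1 | exact: derivableD f2 g2].
Qed.

Lemma pderCD f g : pderivable f -> pderivable g ->
  pderC (fun t => f t + g t) th j = pderC f th j + pderC g th j.
Proof.
move=> [f1 f2] [g1 g2].
by rewrite /pderC funReD funImD (deriveD f1 g1) (deriveD f2 g2).
Qed.

Lemma pderivableM f g : pderivable f -> pderivable g -> pderivable (fun t => f t * g t).
Proof.
move=> [f1 f2] [g1 g2]; rewrite /pderivable funReM funImM.
split; first exact: derivableB (derivableM f1 g1) (derivableM f2 g2).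
exact: derivableD (derivableM f1 g2) (derivableM f2 g1).
Qed.

Lemma pderCM f g : pderivable f -> pderivable g ->
  pderC (fun t => f t * g t) th j = pderC f th j * g th + f th * pderC g th j.
Proof.
move=> [f1 f2] [g1 g2]; rewrite /pderC funReM funImM.
rewrite (deriveB (derivableM f1 g1) (derivableM f2 g2)).
rewrite (deriveD (derivableM f1 g2) (derivableM f2 g1)).
rewrite (deriveM f1 g1) (deriveM f2 g2) (deriveM f1 g2) (deriveM f2 g1).
move: ('D_(ebasis R j) (fun t => complex.Re (f t)) th) => a'.
move: ('D_(ebasis R j) (fun t => complex.Im (f t)) th) => b'.
move: ('D_(ebasis R j) (fun t => complex.Re (g t)) th) => c'.
move: ('D_(ebasis R j) (fun t => complex.Im (g t)) th) => d'.
rewrite /=; case: (f th) => a b; case: (g th) => c d /=.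
by congr Complex; rewrite /GRing.scale /=; ring.
Qed.

Lemma pderivable_conj f : pderivable f -> pderivable (fun t => conjc (f t)).
Proof.
move=> [f1 f2]; rewrite /pderivable funRe_conj funIm_conj.
by split; [exact: f1 | exact: derivableN].
Qed.

Lemma pderC_conj f : pderivable f -> pderC (fun t => conjc (f t)) th j = conjc (pderC f th j).
Proof. by move=> [_ f2]; rewrite /pderC funRe_conj funIm_conj (deriveN f2). Qed.

Lemma pderivable_sum (I : Type) (r : seq I) (F : I -> V -> R[i]) :
  (forall i, pderivable (F i)) -> pderivable (fun t => \sum_(i <- r) F i t).
Proof.
move=> dF; elim: r => [|x r IH].
  under eq_fun do rewrite big_nil; exact: pderivable_cst.
under eq_fun do rewrite big_cons; exact: pderivableD (dF x) IH.
Qed.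

Lemma pderC_sum (I : Type) (r : seq I) (F : I -> V -> R[i]) :
  (forall i, pderivable (F i)) ->
  pderC (fun t => \sum_(i <- r) F i t) th j = \sum_(i <- r) pderC (F i) th j.
Proof.
move=> dF; elim: r => [|x r IH].
  by under eq_fun do rewrite big_nil; rewrite pderC_cst big_nil.
under eq_fun do rewrite big_cons.
by rewrite (pderCD (dF x) (pderivable_sum r dF)) IH big_cons.
Qed.

Lemma pderC_near f g : (\forall t \near th, f t = g t) -> pderC f th j = pderC g th j.
Proof.
move=> fg; rewrite /pderC.
rewrite (near_eq_derive _ (g := fun t => complex.Re (g t))); last first.
  by apply: filterS fg => t /= ->.
rewrite (near_eq_derive _ (f := fun t => complex.Im (f t)) (g := fun t => complex.Im (g t))) //.
by apply: filterS fg => t /= ->.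
Qed.

Lemma pderivable_real (r : V -> R) :
  derivable r th (ebasis R j) -> pderivable (fun t => Complex (r t) 0).
Proof. by move=> dr; split; [exact: dr | exact: derivable_cst]. Qed.

Lemma pderC_real (r : V -> R) :
  pderC (fun t => Complex (r t) 0) th j = Complex ('D_(ebasis R j) r th) 0.
Proof.
rewrite /pderC.
have -> : (fun t : V => complex.Im (Complex (r t) 0)) = cst 0 by [].
by rewrite derive_cst.
Qed.

Definition pderivable_mx m n (F : V -> 'M[R[i]]_(m, n)) :=
  forall a b, pderivable (fun t => F t a b).

Lemma differentiable_pderivable_mx m n (F : V -> 'M[R[i]]_(m, n)) :
  cmx_differentiable F th -> pderivable_mx F.
Proof. by move=> dF a b; apply: differentiable_pderivable. Qed.

Lemma pderivable_mx_cst m n (M : 'M[R[i]]_(m, n)) : pderivable_mx (fun _ => M).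
Proof. by move=> a b; apply: pderivable_cst. Qed.

Lemma pderM_cst m n (M : 'M[R[i]]_(m, n)) : pderM (fun _ => M) th j = 0.
Proof. by apply/matrixP => a b; rewrite !mxE pderC_cst. Qed.

Lemma fun_mulmxE m n q (F : V -> 'M[R[i]]_(m, n)) (G : V -> 'M[R[i]]_(n, q)) a b :
  (fun t => (F t *m G t) a b) = (fun t => \sum_(c < n) F t a c * G t c b).
Proof. by apply: funext => t; rewrite mxE. Qed.

Lemma pderivable_mx_mul m n q (F : V -> 'M[R[i]]_(m, n)) (G : V -> 'M[R[i]]_(n, q)) :
  pderivable_mx F -> pderivable_mx G -> pderivable_mx (fun t => F t *m G t).
Proof.
move=> dF dG a b; rewrite fun_mulmxE; apply: pderivable_sum => c.
exact: pderivableM.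
Qed.

Lemma pderM_mul m n q (F : V -> 'M[R[i]]_(m, n)) (G : V -> 'M[R[i]]_(n, q)) :
  pderivable_mx F -> pderivable_mx G ->
  pderM (fun t => F t *m G t) th j = pderM F th j *m G th + F th *m pderM G th j.
Proof.
move=> dF dG; apply/matrixP => a b; rewrite !mxE fun_mulmxE.
rewrite (pderC_sum _ (fun c => pderivableM (dF a c) (dG c b))) -big_split.
by apply: eq_bigr => c _; rewrite (pderCM (dF a c) (dG c b)) !mxE.
Qed.

Lemma fun_mxadjE m n (F : V -> 'M[R[i]]_(m, n)) a b :
  (fun t => mxadj (F t) a b) = (fun t => conjc (F t b a)).
Proof. by apply: funext => t; rewrite /mxadj !mxE. Qed.

Lemma pderivable_mx_adj m n (F : V -> 'M[R[i]]_(m, n)) :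
  pderivable_mx F -> pderivable_mx (fun t => mxadj (F t)).
Proof. by move=> dF a b; rewrite fun_mxadjE; apply: pderivable_conj. Qed.

Lemma pderM_adj m n (F : V -> 'M[R[i]]_(m, n)) : pderivable_mx F ->
  pderM (fun t => mxadj (F t)) th j = mxadj (pderM F th j).
Proof.
move=> dF; apply/matrixP => a b; rewrite /mxadj !mxE -/(mxadj _).
by rewrite fun_mxadjE (pderC_conj (dF b a)).
Qed.

Lemma pderM_sum m n (I : Type) (r : seq I) (F : I -> V -> 'M[R[i]]_(m, n)) :
  (forall k, pderivable_mx (F k)) ->
  pderM (fun t => \sum_(k <- r) F k t) th j = \sum_(k <- r) pderM (F k) th j.
Proof.
move=> dF; apply/matrixP => a b; rewrite summxE !mxE.
under eq_fun do rewrite summxE.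
by rewrite (pderC_sum _ (fun k => dF k a b)); apply: eq_bigr => k _; rewrite mxE.
Qed.

Lemma pderM_scale m n (c : V -> R[i]) (F : V -> 'M[R[i]]_(m, n)) :
  pderivable c -> pderivable_mx F ->
  pderM (fun t => c t *: F t) th j = pderC c th j *: F th + c th *: pderM F th j.
Proof.
move=> dc dF; apply/matrixP => a b; rewrite !mxE.
under eq_fun do rewrite mxE.
exact: pderCM dc (dF a b).
Qed.

Lemma pderM_near m n (F G : V -> 'M[R[i]]_(m, n)) :
  (\forall t \near th, F t = G t) -> pderM F th j = pderM G th j.
Proof.
move=> FG; apply/matrixP => a b; rewrite !mxE; apply: pderC_near.
by apply: filterS FG => t /= ->.
Qed.

End PartialDerivatives.
Section Adjoint.
Variable R : realType.
Local Notation C := R[i].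

Lemma mxadjE m n (A : 'M[C]_(m, n)) a b : mxadj A a b = conjc (A b a).
Proof. by rewrite /mxadj !mxE. Qed.

Lemma mxadjM m n q (A : 'M[C]_(m, n)) (B : 'M[C]_(n, q)) :
  mxadj (A *m B) = mxadj B *m mxadj A.
Proof.
apply/matrixP => a b; rewrite !mxE rmorph_sum; apply: eq_bigr => c _.
by rewrite !mxadjE rmorphM /= mulrC.
Qed.

Lemma mxadjK m n (A : 'M[C]_(m, n)) : mxadj (mxadj A) = A.
Proof. by apply/matrixP => a b; rewrite !mxadjE conjcK. Qed.

Lemma mxadjZ m n (c : C) (A : 'M[C]_(m, n)) : mxadj (c *: A) = conjc c *: mxadj A.
Proof. by apply/matrixP => a b; rewrite [RHS]mxE !mxadjE mxE rmorphM. Qed.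

Lemma braketE D (u v : 'cV[C]_D) : braket u v = \sum_a conjc (u a 0) * v a 0.
Proof. by rewrite /braket mxE; apply: eq_bigr => a _; rewrite mxadjE. Qed.

Lemma braket_mulmxr D (u v : 'cV[C]_D) (M : 'M[C]_D) :
  braket u (M *m v) = braket (mxadj M *m u) v.
Proof. by rewrite /braket mxadjM mxadjK mulmxA. Qed.

Lemma conjc_braket D (u v : 'cV[C]_D) : conjc (braket u v) = braket v u.
Proof.
rewrite !braketE rmorph_sum; apply: eq_bigr => a _.
by rewrite rmorphM /= conjcK mulrC.
Qed.

Lemma braketDr D (u v1 v2 : 'cV[C]_D) : braket u (v1 + v2) = braket u v1 + braket u v2.
Proof. by rewrite /braket mulmxDr mxE. Qed.

Lemma braketZr D (u v : 'cV[C]_D) c : braket u (c *: v) = c * braket u v.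
Proof. by rewrite /braket -scalemxAr mxE. Qed.

Lemma braketZl D (u v : 'cV[C]_D) c : braket (c *: u) v = conjc c * braket u v.
Proof. by rewrite /braket mxadjZ -scalemxAl mxE. Qed.

Lemma braket0r D (u : 'cV[C]_D) : braket u 0 = 0.
Proof. by rewrite /braket mulmx0 mxE. Qed.

Lemma braket_sumr D (I : Type) (r : seq I) (u : 'cV[C]_D) (F : I -> 'cV[C]_D) :
  braket u (\sum_(k <- r) F k) = \sum_(k <- r) braket u (F k).
Proof. by rewrite /braket mulmx_sumr summxE. Qed.

Lemma mulmx_outer D (u v x : 'cV[C]_D) : (u *m mxadj v) *m x = braket v x *: u.
Proof.
rewrite -mulmxA; have -> : mxadj v *m x = (braket v x)%:M.
  by apply/matrixP => i k; rewrite !ord1 /braket !mxE.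
by rewrite mul_mx_scalar.
Qed.

Lemma mxtrace_mul_outer D (A B : 'M[C]_D) (u v : 'cV[C]_D) :
  \tr (A *m (u *m mxadj v) *m B) = braket v (B *m (A *m u)).
Proof.
rewrite mulmxA -mulmxA mxtrace_mulC /braket mulmxA.
by rewrite /mxtrace big_ord1.
Qed.

Section Parseval.
Variables (D : nat) (w : 'I_D -> 'cV[C]_D).
Hypothesis w_orthonormal : forall m n, braket (w m) (w n) = (if m == n then 1 else 0).

Let W := \matrix_(a, k) w k a 0.

Let adjW_mulE (u : 'cV[C]_D) m : (mxadj W *m u) m 0 = braket (w m) u.
Proof. by rewrite mxE braketE; apply: eq_bigr => a _; rewrite mxadjE mxE. Qed.

(* W has orthonormal columns, so it is unitary and W^dagger preserves brakets. *)
Let W_mul_adjW : W *m mxadj W = 1%:M.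
Proof.
apply: mulmx1C; apply/matrixP => m n.
have -> : (mxadj W *m W) m n = braket (w m) (w n).
  by rewrite mxE braketE; apply: eq_bigr => a _; rewrite mxadjE !mxE.
by rewrite w_orthonormal mxE; case: (m == n).
Qed.

Lemma braket_parseval (u v : 'cV[C]_D) :
  braket u v = \sum_m conjc (braket (w m) u) * braket (w m) v.
Proof.
have -> : braket u v = braket (mxadj W *m u) (mxadj W *m v).
  by rewrite braket_mulmxr mxadjK mulmxA W_mul_adjW mul1mx.
by rewrite braketE; apply: eq_bigr => m _; rewrite !adjW_mulE.
Qed.

End Parseval.
End Adjoint.

Section RealDot.
Variable R : realType.
Local Notation C := R[i].

Definition redot (a b : C) : R := complex.Re (conjc a * b).

Lemma redot0r a : redot a 0 = 0.
Proof. by rewrite /redot mulr0. Qed.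

Lemma redotZ (x : R) a b : redot (x%:C * a) (x%:C * b) = x ^+ 2 * redot a b.
Proof. by rewrite -complexr0; case: a => ? ?; case: b => ? ?; rewrite /redot /=; ring. Qed.

Lemma redot_conj a b : redot (conjc a) (conjc b) = redot a b.
Proof. by case: a => ? ?; case: b => ? ?; rewrite /redot /=; ring. Qed.

Lemma redotxx_ge0 z : 0 <= redot z z.
Proof. by case: z => a b; rewrite /redot /=; nra. Qed.

Lemma redotxx_eq0 z : redot z z = 0 -> z = 0.
Proof.
case: z => a b; rewrite /redot /= => h.
have a0 : a = 0 by nra.
have b0 : b = 0 by nra.
by rewrite a0 b0.
Qed.

Lemma redot_sum_real (I : finType) (E : I -> C) (x : I -> R) :
  \sum_j \sum_k x j * x k * redot (E k) (E j)
  = redot (\sum_k (x k)%:C * E k) (\sum_j (x j)%:C * E j).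
Proof.
rewrite /redot rmorph_sum mulr_suml raddf_sum exchange_big /=.
apply: eq_bigr => k _; rewrite mulr_sumr raddf_sum; apply: eq_bigr => j _.
by rewrite -!complexr0; case: (E k) => a b; case: (E j) => c d /=; ring.
Qed.

End RealDot.
Section WeightedGram.
Variables (R : realType) (I K : finType).
Variables (c : K -> K -> R) (E : I -> K -> K -> R[i]).

Definition wgram j k := \sum_m \sum_n c m n * redot (E k m n) (E j m n).

Hypothesis c_ge0 : forall m n, 0 <= c m n.

Lemma wgram_psd (x : I -> R) : 0 <= \sum_j \sum_k x j * wgram j k * x k.
Proof.
have -> : \sum_j \sum_k x j * wgram j k * x k =
    \sum_m \sum_n c m n * \sum_j \sum_k x j * x k * redot (E k m n) (E j m n).
  transitivity (\sum_j \sum_k \sum_m \sum_n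
                  c m n * (x j * x k * redot (E k m n) (E j m n))).
    apply: eq_bigr => j _; apply: eq_bigr => k _.
    rewrite mulrC mulrA mulr_sumr; apply: eq_bigr => m _.
    by rewrite mulr_sumr; apply: eq_bigr => n _; ring.
  under eq_bigr do rewrite exchange_big.
  rewrite exchange_big; apply: eq_bigr => m _.
  under eq_bigr do rewrite exchange_big.
  rewrite exchange_big; apply: eq_bigr => n _.
  by rewrite mulr_sumr; apply: eq_bigr => j _; rewrite mulr_sumr.
apply: sumr_ge0 => m _; apply: sumr_ge0 => n _.
by rewrite redot_sum_real mulr_ge0 ?redotxx_ge0.
Qed.

Lemma wgram_diag_eq0 j : wgram j j = 0 -> forall m n, c m n != 0 -> E j m n = 0.
Proof.
rewrite /wgram => g0 m n cn0.
have term_ge0 m' n' : 0 <= c m' n' * redot (E j m' n') (E j m' n').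
  by rewrite mulr_ge0 ?redotxx_ge0.
have row_ge0 m' : 0 <= \sum_n' c m' n' * redot (E j m' n') (E j m' n').
  by apply: sumr_ge0 => n' _.
have row0 : \sum_n' c m n' * redot (E j m n') (E j m n') = 0 :=
  psumr_eq0P (fun m' _ => row_ge0 m') g0 isT.
have /eqP : c m n * redot (E j m n) (E j m n) = 0 :=
  psumr_eq0P (fun n' _ => term_ge0 m n') row0 isT.
by rewrite mulf_eq0 (negPf cn0) => /eqP /redotxx_eq0.
Qed.

Lemma wgram_eq0 j k : (forall m n, c m n != 0 -> E j m n = 0) -> wgram j k = 0.
Proof.
move=> Ej0; apply: big1 => m _; apply: big1 => n _.
have [->|cn0] := eqVneq (c m n) 0; first by rewrite mul0r.
by rewrite Ej0 // redot0r mulr0.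
Qed.

End WeightedGram.

Section SLDGap.
Variables (R : realType) (I K : finType).
Local Notation C := R[i].

(* Solving the SLD relation for l and using the two-variable Lagrange identity
   (s_m^2 + s_n^2)(|a|^2 + |b|^2) - |s_n a + s_m b^*|^2 = |s_m a - s_n b^*|^2,
   polarized in the parameter index. *)
Lemma redot_sld_pair (sm sn : R) (aj ak bj bk lj lk : C) :
  sm ^+ 2 + sn ^+ 2 != 0 ->
  (sm ^+ 2 + sn ^+ 2)%:C * lj = 2%:R * (sn%:C * aj + sm%:C * conjc bj) ->
  (sm ^+ 2 + sn ^+ 2)%:C * lk = 2%:R * (sn%:C * ak + sm%:C * conjc bk) ->
  2%:R * (redot ak aj + redot bk bj) - (sm ^+ 2 + sn ^+ 2) / 2%:R * redot lk lj
  = 2%:R / (sm ^+ 2 + sn ^+ 2)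
    * redot (sm%:C * ak - sn%:C * conjc bk) (sm%:C * aj - sn%:C * conjc bj).
Proof.
rewrite /redot -!complexr0 => q0.
case: aj => a1 a2; case: ak => c1 c2; case: bj => b1 b2; case: bk => d1 d2.
case: lj => l1 l2; case: lk => k1 k2.
rewrite /= => [[e1 e2] [f1 f2]].
set q := sm ^+ 2 + sn ^+ 2 in q0 e1 e2 f1 f2 *.
have solve x y : q * x = y -> x = y / q by move=> <-; field.
have El1 : l1 = 2%:R * (sn * a1 + sm * b1) / q.
  by apply: solve; transitivity (q * l1 - 0 * l2); [ring | rewrite e1; ring].
have El2 : l2 = 2%:R * (sn * a2 - sm * b2) / q.
  by apply: solve; transitivity (q * l2 + 0 * l1); [ring | rewrite e2; ring].
have Ek1 : k1 = 2%:R * (sn * c1 + sm * d1) / q.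
  by apply: solve; transitivity (q * k1 - 0 * k2); [ring | rewrite f1; ring].
have Ek2 : k2 = 2%:R * (sn * c2 - sm * d2) / q.
  by apply: solve; transitivity (q * k2 + 0 * k1); [ring | rewrite f2; ring].
by rewrite El1 El2 Ek1 Ek2 /q; field.
Qed.

Variables (s : K -> R) (A L : I -> K -> K -> C).
Hypothesis A_null : forall j m n, s n = 0 -> A j m n = 0.
Hypothesis L_sld : forall j m n, (s m ^+ 2 + s n ^+ 2)%:C * L j m n =
  2%:R * ((s n)%:C * A j m n + (s m)%:C * conjc (A j n m)).
Hypothesis L_herm : forall j m n, L j n m = conjc (L j m n).

Definition sld_gap j m n := (s m)%:C * A j m n - (s n)%:C * conjc (A j n m).

Definition sld_weight m n := 2%:R / (s m ^+ 2 + s n ^+ 2).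

Lemma sld_weight_ge0 m n : 0 <= sld_weight m n.
Proof. by rewrite divr_ge0 ?ler0n ?addr_ge0 ?sqr_ge0. Qed.

Lemma sld_gap_entry j k m n :
  sld_weight m n * redot (sld_gap k m n) (sld_gap j m n)
  = 2%:R * (redot (A k m n) (A j m n) + redot (A k n m) (A j n m))
    - (s m ^+ 2 + s n ^+ 2) / 2%:R * redot (L k m n) (L j m n).
Proof.
rewrite /sld_weight /sld_gap.
have [q0|q0] := eqVneq (s m ^+ 2 + s n ^+ 2) 0; last first.
  by rewrite (redot_sld_pair q0 (L_sld j m n) (L_sld k m n)).
have /andP[/eqP sm0 /eqP sn0] : (s m == 0) && (s n == 0).
  by rewrite -[s m == 0]sqrf_eq0 -[s n == 0]sqrf_eq0 -paddr_eq0 ?sqr_ge0 ?q0.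
by rewrite q0 !(A_null _ _ sn0) !(A_null _ _ sm0) invr0 !redot0r; ring.
Qed.

Lemma sld_gap_sum j k :
  4%:R * (\sum_n \sum_m redot (A k m n) (A j m n))
  - \sum_n \sum_m s n ^+ 2 * redot (L k m n) (L j m n)
  = wgram sld_weight sld_gap j k.
Proof.
pose X m n := redot (A k m n) (A j m n).
pose Y m n := redot (L k m n) (L j m n).
have Ysym m n : Y n m = Y m n by rewrite /Y (L_herm k) (L_herm j) redot_conj.
have sumXt : \sum_m \sum_n X n m = \sum_m \sum_n X m n by rewrite exchange_big.
have sumYl : \sum_m \sum_n s m ^+ 2 * Y m n = \sum_m \sum_n s n ^+ 2 * Y m n.
  by rewrite exchange_big; apply: eq_bigr => m _; apply: eq_bigr => n _; rewrite Ysym.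
transitivity (\sum_m \sum_n
    (2%:R * (X m n + X n m) - (s m ^+ 2 + s n ^+ 2) / 2%:R * Y m n)); last first.
  by apply: eq_bigr => m _; apply: eq_bigr => n _; rewrite sld_gap_entry.
rewrite [RHS](eq_bigr (fun m => 2%:R * \sum_n X m n + 2%:R * \sum_n X n m
    - (\sum_n s m ^+ 2 * Y m n + \sum_n s n ^+ 2 * Y m n) / 2%:R)); last first.
  move=> m _; rewrite -big_split mulr_suml !mulr_sumr -big_split -sumrB /=.
  by apply: eq_bigr => n _; ring.
have sumYt : \sum_n \sum_m s n ^+ 2 * Y m n = \sum_m \sum_n s n ^+ 2 * Y m n.
  by rewrite exchange_big.
rewrite sumrB big_split -mulr_suml big_split /= -!mulr_sumr sumXt sumYl sumYt.
by field.
Qed.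

End SLDGap.
Lemma quad_form_sub (R : pzRingType) (p : nat) (A B : 'M[R]_p) (x : 'rV[R]_p) :
  (x *m (B - A) *m x^T) 0 0 = \sum_j \sum_k x 0 j * (B j k - A j k) * x 0 k.
Proof.
rewrite mxE exchange_big; apply: eq_bigr => k _.
by rewrite mxE mulr_suml; apply: eq_bigr => j _; rewrite !mxE.
Qed.

Lemma sum_delta_mull (T : finType) (V : pzRingType) (F : T -> V) n :
  \sum_k (if k == n then 1 else 0) * F k = F n.
Proof. by rewrite (bigD1 n) //= eqxx mul1r big1 ?addr0 // => k /negPf ->; rewrite mul0r. Qed.

Section SarovarMilburn.
Variables (R : realType) (p D : nat) (Theta : set 'rV[R]_p)
  (Ups : 'I_D -> 'rV[R]_p -> 'M[R[i]]_D) (psi0 : 'cV[R[i]]_D)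
  (pr : 'I_D -> 'rV[R]_p -> R) (w : 'I_D -> 'rV[R]_p -> 'cV[R[i]]_D).
Hypothesis Theta_open : open Theta.
Hypothesis Ups_diff : forall k th, Theta th -> cmx_differentiable (Ups k) th.
Hypothesis w_diff : forall k th, Theta th -> cmx_differentiable (w k) th.
Hypothesis Ups_psi0 : forall th k, Theta th ->
  Ups k th *m psi0 = Complex (Num.sqrt (pr k th)) 0 *: w k th.
Hypothesis w_orthonormal : forall th j k, Theta th ->
  braket (w j th) (w k th) = (if j == k then 1 else 0).
Hypothesis pr_dichotomy : forall k,
  (forall th, Theta th -> pr k th = 0) \/ (forall th, Theta th -> 0 < pr k th).
Variable th : 'rV[R]_p.
Hypothesis Theta_th : Theta th.

Local Notation s k := (Num.sqrt (pr k th)).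
Local Notation rho := (out_state Ups (pure_state psi0)).
Local Notation dUps l k := (pderM (Ups k) th l *m psi0).

Lemma near_Theta : \forall t \near th, Theta t.
Proof. exact: open_nbhs_nbhs. Qed.

Lemma pr_ge0 k : 0 <= pr k th.
Proof. by case: (pr_dichotomy k) => h; [rewrite h | apply/ltW/h]. Qed.

Lemma pr_eq0_or_gt0 k : pr k th = 0 \/ 0 < pr k th.
Proof. by have := pr_ge0 k; rewrite le_eqVlt => /orP[/eqP <-|]; [left | right]. Qed.

Lemma sqr_sqrt_pr k : s k ^+ 2 = pr k th.
Proof. by rewrite sqr_sqrtr ?pr_ge0. Qed.

Lemma sqrt_pr_eq0 k : (s k == 0) = (pr k th == 0).
Proof. by rewrite sqrtr_eq0 eq_le pr_ge0 andbT. Qed.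

Let Ups_pd l k : pderivable_mx th l (Ups k).
Proof. exact/differentiable_pderivable_mx/Ups_diff. Qed.

Let w_pd l k : pderivable_mx th l (w k).
Proof. exact/differentiable_pderivable_mx/w_diff. Qed.

Lemma Ups_psi0_th k : Ups k th *m psi0 = (s k)%:C *: w k th.
Proof. by rewrite Ups_psi0 // complexr0. Qed.

Lemma w_orthonormal_th m n : braket (w m th) (w n th) = (if m == n then 1 else 0).
Proof. exact: w_orthonormal. Qed.

Lemma pderM_Ups_psi0 l k : pderM (fun t => Ups k t *m psi0) th l = dUps l k.
Proof.
by rewrite (pderM_mul (Ups_pd l k) (pderivable_mx_cst _ _ _)) pderM_cst mulmx0 addr0.
Qed.

Lemma out_stateE : rho th = \sum_k (Ups k th *m psi0) *m mxadj (Ups k th *m psi0).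
Proof. by apply: eq_bigr => k _; rewrite /pure_state mxadjM !mulmxA. Qed.

Lemma pderM_out_state l : pderM rho th l =
  \sum_k (dUps l k *m mxadj (Ups k th *m psi0) + (Ups k th *m psi0) *m mxadj (dUps l k)).
Proof.
have dUpsi k : pderivable_mx th l (fun t => Ups k t *m pure_state psi0).
  exact: pderivable_mx_mul (Ups_pd l k) (pderivable_mx_cst _ _ _).
have dterm k :
    pderivable_mx th l (fun t => Ups k t *m pure_state psi0 *m mxadj (Ups k t)).
  exact: pderivable_mx_mul (dUpsi k) (pderivable_mx_adj (Ups_pd l k)).
rewrite /out_state (pderM_sum _ dterm); apply: eq_bigr => k _.
rewrite (pderM_mul (dUpsi k) (pderivable_mx_adj (Ups_pd l k))).
rewrite (pderM_mul (Ups_pd l k) (pderivable_mx_cst _ _ _)) pderM_cst mulmx0 addr0.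
by rewrite (pderM_adj (Ups_pd l k)) /pure_state !mxadjM !mulmxA.
Qed.

(* If p_k vanishes at theta it vanishes on Theta, so Ups_k psi0 = 0 near theta. *)
Lemma dUps_null l k : pr k th = 0 -> dUps l k = 0.
Proof.
move=> pk0; rewrite -pderM_Ups_psi0.
have pk_null t : Theta t -> pr k t = 0.
  case: (pr_dichotomy k) => h; first exact: h.
  by have := h th Theta_th; rewrite pk0 ltxx.
have Ups_psi0_near : \forall t \near th, Ups k t *m psi0 = (fun _ => 0 : 'cV_D) t.
  apply: filterS near_Theta => t Tt.
  by rewrite Ups_psi0 // pk_null // sqrtr0 complexr0 rmorph0 scale0r.
by rewrite (pderM_near l Ups_psi0_near) pderM_cst.
Qed.

(* sqrt p_k is differentiable because it equals <w_k| Ups_k |psi0> near theta. *)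
Lemma dUps_pos l k : 0 < pr k th ->
  dUps l k = Complex ('D_(ebasis R l) (fun t => Num.sqrt (pr k t)) th) 0 *: w k th
             + Complex (s k) 0 *: pderM (w k) th l.
Proof.
move=> pk.
pose b t := (mxadj (w k t) *m (Ups k t *m psi0)) 0 0.
have db : pderivable th l b.
  exact: (pderivable_mx_mul (pderivable_mx_adj (w_pd l k))
           (pderivable_mx_mul (Ups_pd l k) (pderivable_mx_cst _ _ _)) 0 0).
have dsqrt : derivable (fun t => Num.sqrt (pr k t)) th (ebasis R l).
  apply: (near_eq_derivable _ db.1); apply: filterS near_Theta => t Tt /=.
  rewrite /b Ups_psi0 // -/(braket _ _) braketZr w_orthonormal //.
  by rewrite eqxx mulr1.
have Ups_psi0_near : \forall t \near th,
    Ups k t *m psi0 = Complex (Num.sqrt (pr k t)) 0 *: w k t.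
  by apply: filterS near_Theta => t Tt; apply: Ups_psi0.
rewrite -pderM_Ups_psi0 (pderM_near l Ups_psi0_near).
by rewrite (pderM_scale (pderivable_real dsqrt) (w_pd l k)) pderC_real.
Qed.

(* Differentiate the orthonormality relation <w_m|w_n> = delta_mn. *)
Lemma braket_pderM_skew l m n :
  braket (w m th) (pderM (w n) th l) + conjc (braket (w n th) (pderM (w m) th l)) = 0.
Proof.
have won_near : \forall t \near th,
    mxadj (w m t) *m w n t = const_mx (if m == n then 1 else 0).
  apply: filterS near_Theta => t Tt; apply/matrixP => a b.
  by rewrite !ord1 [RHS]mxE; apply: w_orthonormal.
have := pderM_near l won_near.
rewrite pderM_cst (pderM_mul (pderivable_mx_adj (w_pd l m)) (w_pd l n)).
rewrite (pderM_adj (w_pd l m)).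
move=> /(congr1 (fun M : 'M[R[i]]_1 => M 0 0)).
rewrite [X in X = _ -> _]mxE [X in _ = X -> _]mxE => e.
by rewrite conjc_braket addrC; exact: e.
Qed.

Lemma out_state_w n : rho th *m w n th = (pr n th)%:C *: w n th.
Proof.
rewrite out_stateE mulmx_suml (bigD1 n) //= big1 ?addr0 => [|k /negPf kn];
  rewrite mulmx_outer Ups_psi0_th braketZl w_orthonormal_th.
  by rewrite eqxx mulr1 conjc_real scalerA -rmorphM -expr2 sqr_sqrt_pr.
by rewrite kn mulr0 scale0r.
Qed.

Lemma braket_out_state m x :
  braket (w m th) (rho th *m x) = (pr m th)%:C * braket (w m th) x.
Proof.
rewrite out_stateE mulmx_suml braket_sumr (bigD1 m) //= big1 ?addr0 => [|k /negPf km];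
  rewrite mulmx_outer braketZr Ups_psi0_th braketZr w_orthonormal_th.
  rewrite eqxx mulr1 braketZl conjc_real mulrC mulrA -rmorphM -expr2.
  by rewrite sqr_sqrt_pr.
by rewrite eq_sym km !mulr0.
Qed.

Definition dkraus_coef l m n := braket (w m th) (dUps l n).
Definition dbasis_coef l m n := braket (w m th) (pderM (w n) th l).

Local Notation gap := (sld_gap (fun n => s n) dkraus_coef).
Local Notation weight := (sld_weight (fun n => s n)).

Lemma dkraus_coef_null l m n : s n = 0 -> dkraus_coef l m n = 0.
Proof.
by move/eqP; rewrite sqrt_pr_eq0 => /eqP pn0; rewrite /dkraus_coef dUps_null // braket0r.
Qed.

Lemma braket_pderM_out_state l m n :
  braket (w m th) (pderM rho th l *m w n th) =
  (s n)%:C * dkraus_coef l m n + (s m)%:C * conjc (dkraus_coef l n m).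
Proof.
rewrite pderM_out_state mulmx_suml braket_sumr.
transitivity (\sum_k ((if k == n then 1 else 0) * ((s k)%:C * dkraus_coef l m k)
                    + (if k == m then 1 else 0) * ((s k)%:C * conjc (dkraus_coef l n k)))).
  apply: eq_bigr => k _.
  rewrite mulmxDl braketDr !mulmx_outer !braketZr Ups_psi0_th braketZl braketZr.
  rewrite !w_orthonormal_th conjc_real -(conjc_braket (w n th)) (eq_sym m k).
  by congr (_ + _); [rewrite -mulrA mulrCA | rewrite mulrC -mulrA mulrCA].
by rewrite big_split /= !sum_delta_mull.
Qed.

Lemma SM_boundE j k : SM_bound Ups (pure_state psi0) th j k =
  4%:R * (\sum_n \sum_m redot (dkraus_coef k m n) (dkraus_coef j m n)).
Proof.
rewrite mxE; congr (_ * _); apply: eq_bigr => n _.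
rewrite /pure_state mxtrace_mul_outer braket_mulmxr mxadjK.
by rewrite (braket_parseval w_orthonormal_th) raddf_sum.
Qed.

Lemma sld_gap_pos l m n : 0 < pr m th -> 0 < pr n th ->
  gap l m n = 2%:R * (s m)%:C * (s n)%:C * dbasis_coef l m n.
Proof.
move=> pm pn.
have skew : conjc (dbasis_coef l n m) = - dbasis_coef l m n.
  by apply/eqP; rewrite -addr_eq0 addrC; apply/eqP; apply: braket_pderM_skew.
rewrite /sld_gap /dkraus_coef !dUps_pos // !braketDr !braketZr !w_orthonormal_th.
rewrite -/(dbasis_coef l m n) -/(dbasis_coef l n m) !complexr0.
rewrite rmorphD !rmorphM /= !oppr0 !complexr0 skew.
by case: eqVneq => [<-|/negPf mn]; rewrite ?eqxx ?rmorph1 ?(eq_sym n m) ?mn ?rmorph0; ring.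
Qed.

Lemma sld_gap_null l m n : pr m th = 0 \/ pr n th = 0 -> gap l m n = 0.
Proof.
have s0 k : pr k th = 0 -> s k = 0 by move=> ->; rewrite sqrtr0.
rewrite /sld_gap; case=> /s0 sk0.
  by rewrite (dkraus_coef_null _ _ sk0) sk0 rmorph0 mul0r conjc0 mulr0 subr0.
by rewrite (dkraus_coef_null _ _ sk0) sk0 rmorph0 mul0r mulr0 subr0.
Qed.

Lemma sld_weight_neq0 m n : 0 < pr m th -> 0 < pr n th -> weight m n != 0.
Proof.
move=> pm pn; rewrite /sld_weight !sqr_sqrt_pr mulf_neq0 ?pnatr_eq0 //.
by rewrite invr_neq0 // lt0r_neq0 // addr_gt0.
Qed.

Variable lam : 'I_p -> 'M[R[i]]_D.
Hypothesis lam_SLD : forall l, is_SLD rho th l (lam l).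

Definition sld_coef l m n := braket (w m th) (lam l *m w n th).

Lemma sld_coef_herm l m n : sld_coef l n m = conjc (sld_coef l m n).
Proof. by rewrite /sld_coef braket_mulmxr (proj1 (lam_SLD l)) conjc_braket. Qed.

Lemma sld_coef_eq l m n : (s m ^+ 2 + s n ^+ 2)%:C * sld_coef l m n =
  2%:R * ((s n)%:C * dkraus_coef l m n + (s m)%:C * conjc (dkraus_coef l n m)).
Proof.
rewrite -braket_pderM_out_state (proj2 (lam_SLD l)) -scalemxAl braketZr.
rewrite mulmxDl braketDr -mulmxA braket_out_state -mulmxA out_state_w.
rewrite -scalemxAr braketZr !sqr_sqrt_pr rmorphD mulrA divff ?mul1r ?mulrDl //.
Qed.

Lemma SLD_infoE j k : SLD_info (rho th) lam j k =
  \sum_n \sum_m s n ^+ 2 * redot (sld_coef k m n) (sld_coef j m n).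
Proof.
rewrite mxE out_stateE mulmx_sumr mulmx_suml [\tr _]raddf_sum raddf_sum.
apply: eq_bigr => n _ /=.
rewrite mxtrace_mul_outer braket_mulmxr (proj1 (lam_SLD k)).
rewrite (braket_parseval w_orthonormal_th) raddf_sum; apply: eq_bigr => m _.
by rewrite Ups_psi0_th -!scalemxAr !braketZr -redotZ.
Qed.

Lemma SM_bound_sub_SLD_info j k :
  SM_bound Ups (pure_state psi0) th j k - SLD_info (rho th) lam j k =
  wgram weight gap j k.
Proof.
rewrite SM_boundE SLD_infoE.
exact: (sld_gap_sum dkraus_coef_null sld_coef_eq sld_coef_herm).
Qed.

Lemma SLD_info_le_SM_bound :
  psd_le (SLD_info (rho th) lam) (SM_bound Ups (pure_state psi0) th).
Proof.
move=> x; rewrite quad_form_sub.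
under eq_bigr do under eq_bigr do rewrite SM_bound_sub_SLD_info.
exact: (wgram_psd gap (sld_weight_ge0 _) (fun j => x 0 j)).
Qed.

Lemma SLD_info_eq_SM_boundP :
  SLD_info (rho th) lam = SM_bound Ups (pure_state psi0) th <->
  (forall l j k, 0 < pr j th -> 0 < pr k th -> braket (pderM (w j) th l) (w k th) = 0).
Proof.
split=> [HC l j k pj pk | dbasis0].
  have gram0 : wgram weight gap l l = 0 by rewrite -SM_bound_sub_SLD_info HC subrr.
  have := wgram_diag_eq0 (sld_weight_ge0 _) gram0 (sld_weight_neq0 pk pj).
  rewrite sld_gap_pos // => /eqP.
  rewrite !mulf_eq0 pnatr_eq0 !fmorph_eq0 !sqrt_pr_eq0 (gt_eqF pk) (gt_eqF pj) /=.
  move=> /eqP dW0.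
  by rewrite -conjc_braket -/(dbasis_coef l k j) dW0 conjc0.
apply/matrixP => j k; apply/eqP; rewrite eq_sym -subr_eq0 SM_bound_sub_SLD_info.
apply/eqP/wgram_eq0 => m n _.
case: (pr_eq0_or_gt0 m) => [pm0|pm]; first by apply: sld_gap_null; left.
case: (pr_eq0_or_gt0 n) => [pn0|pn]; first by apply: sld_gap_null; right.
by rewrite sld_gap_pos // /dbasis_coef -conjc_braket dbasis0 // conjc0 mulr0.
Qed.

End SarovarMilburn.

Theorem theorem2p9 (R : realType) (p D : nat) (Theta : set 'rV[R]_p)
  (Ups : 'I_D -> 'rV[R]_p -> 'M[R[i]]_D) (psi0 : 'cV[R[i]]_D)
  (pr : 'I_D -> 'rV[R]_p -> R) (w : 'I_D -> 'rV[R]_p -> 'cV[R[i]]_D) :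
  (0 < D)%N ->
  open Theta ->
  mxadj psi0 *m psi0 = 1%:M ->
  (forall k th, Theta th -> cmx_differentiable (Ups k) th) ->
  (forall k th, Theta th -> cmx_differentiable (w k) th) ->
  (forall th, Theta th ->
     \sum_(k < D) (mxadj (Ups k th) *m Ups k th) = 1%:M) ->
  (forall th j k, Theta th ->
     \tr (Ups k th *m pure_state psi0 *m mxadj (Ups j th))
       = (if j == k then Complex (pr k th) 0 else 0)) ->
  (forall th k, Theta th ->
     Ups k th *m psi0 = Complex (Num.sqrt (pr k th)) 0 *: w k th) ->
  (forall th j k, Theta th ->
     braket (w j th) (w k th) = (if j == k then 1 else 0)) ->
  (forall k, (forall th, Theta th -> pr k th = 0) \/
             (forall th, Theta th -> 0 < pr k th)) ->
  forall th, Theta th ->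
  forall lam : 'I_p -> 'M[R[i]]_D,
    (forall j, is_SLD (out_state Ups (pure_state psi0)) th j (lam j)) ->
    let H := SLD_info (out_state Ups (pure_state psi0) th) lam in
    let C := SM_bound Ups (pure_state psi0) th in
    psd_le H C /\
    (H = C <->
     (forall (l : 'I_p) (j k : 'I_D), 0 < pr j th -> 0 < pr k th ->
        braket (pderM (w j) th l) (w k th) = 0)).
Proof.
move=> _ Theta_open _ Ups_diff w_diff _ _ Ups_psi0 w_on pr_dich th Theta_th lam lam_SLD.
split.
  exact (SLD_info_le_SM_bound Theta_open Ups_diff Ups_psi0 w_on pr_dich Theta_th lam_SLD).
exact (SLD_info_eq_SM_boundP Theta_open Ups_diff w_diff Ups_psi0 w_on pr_dich Theta_th lam_SLD).
Qed.
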